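(* For every even integer $k\geq 4$, $$\nu_2\!\left((-1)^{k/2} + \binom{k}{k/2-1}\right) = \begin{cases} 1 & \text{if } k+2 = 2^{\ell} \text{ for some integer } \ell \geq 3,\\ 0 & \text{otherwise.}\end{cases}$$
   Context: For a prime $p$ and nonzero integer $m$, $\nu_p(m)$ denotes the exponent of the highest power of $p$ dividing $m$; this is extended to $\mathbb{Q}$ by $\nu_p(a/b)=\nu_p(a)-\nu_p(b)$ and $\nu_p(0)=\infty$. *)

From mathcomp Require Import all_boot all_order all_algebra.
Set Implicit Arguments. Unset Strict Implicit. Unset Printing Implicit Defensive.
Import GRing.Theory Num.Theory.

(* p-adic valuation of a NONZERO integer m: exponent of the highest power of
   p dividing m.  (For m = 0 the paper sets nu_p(0) = infinity; this function
   returns 0 there, but it is only applied to nonzero integers below.) *)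
Definition nu (p : nat) (m : int) : nat := logn p `|m|%N.

From mathcomp Require Import all_boot all_order all_algebra.
From mathcomp Require Import zify.
Import GRing.Theory.

Set Implicit Arguments.
Unset Strict Implicit.
Unset Printing Implicit Defensive.

(* Write k = 2m.  Since j C(p^n, j) = p^n C(p^n - 1, j - 1), the power
   p^(n - v_p(j)) divides C(p^n, j) for 0 < j.
   If 2^t < m + 1 < 2^(t+1), expand C(k, m - 1) = C(2^(t+1) + (k - 2^(t+1)), m - 1)
   by Vandermonde's identity: every term contains an even factor C(2^(t+1), j)
   with 0 < j, so x = +-1 + C(k, m - 1) is odd.
   If m + 1 = 2^t, then 4 divides C(2^(t+1), j) for 0 < j < 2^t, and Pascal's
   rule gives C(2^(t+1) - 1, j) = (-1)^j and C(2^(t+1) - 2, j) = (-1)^j (j + 1)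
   modulo 4; hence C(k, m - 1) = m = 3 and x = C(k, m - 1) - 1 = 2 modulo 4. *)

Lemma logn_ltn_pow p i j : 1 < p -> 0 < j -> j < p ^ i -> logn p j < i.
Proof.
move=> p_gt1 j_gt0 lt_j_pi; rewrite -(ltn_exp2l _ _ p_gt1).
exact: leq_ltn_trans (dvdn_leq j_gt0 (pfactor_dvdnn p j)) lt_j_pi.
Qed.

Lemma pfactor_dvdn_bin_pow p n j :
  prime p -> 0 < j -> p ^ (n - logn p j) %| 'C(p ^ n, j).
Proof.
move=> p_pr j_gt0; have [-> | bin_gt0] := posnP 'C(p ^ n, j); first exact: dvdn0.
have pn_dvd : p ^ n %| j * 'C(p ^ n, j).
  by rewrite -(prednK j_gt0) -mul_bin_diag dvdn_mulr.
move: pn_dvd; rewrite !pfactor_dvdn ?muln_gt0 ?j_gt0 // lognM //; lia.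
Qed.

Lemma prime_dvd_bin_pow_add p i n K :
  prime p -> n < K < p ^ i -> p %| 'C(p ^ i + n, K).
Proof.
move=> p_pr /andP[lt_nK lt_K_pi].
rewrite -binomial.Vandermonde; apply: dvdn_sum => -[[|j] /= lt_jK] _.
  by rewrite subn0 (bin_small lt_nK) muln0.
apply: dvdn_mulr; apply: dvdn_trans (pfactor_dvdn_bin_pow i p_pr (ltn0Sn j)).
rewrite -{1}(expn1 p) dvdn_exp2l // subn_gt0.
by apply: logn_ltn_pow (prime_gt1 p_pr) _ _; lia.
Qed.

Lemma bin_pow2_pred_mod4 n r :
  r < 2 ^ n.-1 -> 'C((2 ^ n).-1, r) = (if odd r then 3 else 1) %[mod 4].
Proof.
elim: r => [|r IHr] lt_r; first by rewrite bin0.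
have four_dvd : 4 %| 'C(2 ^ n, r.+1).
  apply: dvdn_trans (pfactor_dvdn_bin_pow n (isT : prime 2) (ltn0Sn r)).
  have := logn_ltn_pow (isT : 1 < 2) (ltn0Sn r) lt_r.
  by move=> ?; apply: (@dvdn_exp2l 2 2); lia.
move: four_dvd (IHr (ltnW lt_r)).
rewrite -(prednK (expn_gt0 2 n)) binS /=; case: (odd r) => /=; lia.
Qed.

Lemma bin_pow2_sub2_mod4 n r : r < 2 ^ n.-1 ->
  'C((2 ^ n).-2, r) = (if odd r then 3 * r.+1 else r.+1) %[mod 4].
Proof.
elim: r => [|r IHr] lt_r; first by rewrite bin0.
have n_gt1 : 1 < n by case: n {IHr} lt_r => [|[|n]].
have pow_ge2 : 2 <= 2 ^ n by rewrite -[leqLHS]expn1 leq_exp2l // ltnW.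
move: (bin_pow2_pred_mod4 lt_r) (IHr (ltnW lt_r)).
have -> : (2 ^ n).-1 = (2 ^ n).-2.+1 by lia.
rewrite binS /=; case: (odd r) => /=; lia.
Qed.

Lemma bin_double_pred_even m t :
  2 ^ t < m.+1 < 2 ^ t.+1 -> 2 %| 'C(m.*2, m.-1).
Proof.
rewrite expnS => /andP[lo hi].
have -> : m.*2 = 2 ^ t.+1 + (m.*2 - 2 ^ t.+1) by rewrite expnS; lia.
by apply: prime_dvd_bin_pow_add; rewrite // expnS; lia.
Qed.

Lemma bin_double_pred_mod4 m t :
  2 <= t -> m.+1 = 2 ^ t -> 'C(m.*2, m.-1) = 3 %[mod 4].
Proof.
move=> t_ge2 mE.
have powE : 2 ^ t = 4 * 2 ^ (t - 2) by rewrite -{1}(subnKC t_ge2) expnD.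
have lt_m : m.-1 < 2 ^ t.+1.-1 by rewrite /=; lia.
move: (bin_pow2_sub2_mod4 lt_m); rewrite expnS.
have -> : (2 * 2 ^ t).-2 = m.*2 by lia.
have -> : odd m.-1 = false by lia.
by move=> ->; lia.
Qed.

Lemma logn2_mod4 y : y = 2 %[mod 4] -> logn 2 y = 1.
Proof.
move=> y_mod; have y_gt0 : 0 < y by lia.
have two_dvd : 2 ^ 1 %| y by rewrite expn1; lia.
have four_ndvd : ~~ (2 ^ 2 %| y) by lia.
by move: two_dvd four_ndvd; rewrite !pfactor_dvdn //; lia.
Qed.

Local Open Scope ring_scope.

Lemma absz_signr_addn m c :
  (0 < c)%N -> `|(-1) ^+ m + c%:Z : int|%N = (if odd m then c.-1 else c.+1)%N.
Proof. by move=> c_gt0; rewrite -signr_odd; case: (odd m) => /=; lia. Qed.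

Theorem lemma3p1 (k : nat) (hk4 : (4 <= k)%N) (hkeven : ~~ odd k) :
  let x : int := (-1) ^+ (k %/ 2) + ('C(k, (k %/ 2).-1))%:Z in
  x != 0 /\
  ((exists l : nat, (3 <= l)%N /\ (k + 2 = 2 ^ l)%N) -> nu 2 x = 1%N) /\
  (~ (exists l : nat, (3 <= l)%N /\ (k + 2 = 2 ^ l)%N) -> nu 2 x = 0%N).
Proof.
move=> x; set m := (k %/ 2)%N; set C := 'C(k, m.-1).
have kE : k = m.*2 by rewrite /m; lia.
have C_gt0 : (0 < C)%N by rewrite bin_gt0; lia.
have absxE := absz_signr_addn m C_gt0; rewrite -/x in absxE.
rewrite /nu -absz_eq0 absxE; rewrite {}/C kE in absxE C_gt0 *.
have /andP[lo hi] := trunc_log_bounds (isT : (1 < 2)%N) (ltn0Sn m).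
set t := trunc_log 2 m.+1 in lo hi.
have [powE | neq_pow] := eqVneq (2 ^ t)%N m.+1.
- have t_ge2 : (2 <= t)%N.
    by rewrite -(ltn_exp2l _ _ (isT : (1 < 2)%N)) powE expn1; lia.
  have C_mod4 := bin_double_pred_mod4 t_ge2 (esym powE).
  have m_odd : odd m by have := oddX 2 t; rewrite powE /=; lia.
  rewrite m_odd; split; first lia.
  split=> [_ | []]; first by apply: logn2_mod4; lia.
  by exists t.+1; rewrite expnS; lia.
- have lt_pow : (2 ^ t < m.+1)%N by rewrite ltn_neqAle neq_pow lo.
  have C_even : (2 %| 'C(m.*2, m.-1))%N.
    by apply: (bin_double_pred_even (t := t)); rewrite lt_pow hi.
  have absx_odd : odd (if odd m then ('C(m.*2, m.-1)).-1 else ('C(m.*2, m.-1)).+1).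
    by case: (odd m); lia.
  split; first lia.
  split=> [[l [l_ge3 powlE]] | _]; last by rewrite logn_coprime // coprime2n.
  have mlE : m.+1 = (2 ^ l.-1)%N.
    by rewrite -(prednK (leq_trans (isT : (0 < 3)%N) l_ge3)) expnS in powlE; lia.
  rewrite mlE !ltn_exp2l // in lt_pow hi; lia.
Qed.
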